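(* Let $c_1,\dots,c_s\in\{\pm1\}^n$ with $c_i=(c_{i,1},\dots,c_{i,n})$, let $\sigma=\sum_{i=1}^s c_i=(\sigma_1,\dots,\sigma_n)$, and for $i\in\{0,\dots,s\}$ let $A_i=\{j\in[n]:\sigma_j=s-2i\}$. Then for every $i\in\{1,\dots,\lfloor s/2\rfloor\}$ and every set $\mathcal{B}\subseteq A_i$ of size $\lfloor s\rfloor_i$, there exists $j\in[s]$ such that $c_{j,b}=1$ for all $b\in\mathcal{B}$. Similarly, for every $i\in\{\lfloor s/2\rfloor+1,\dots,s-1\}$ and every set $\mathcal{D}\subseteq A_i$ of size $\lfloor s\rfloor_{s-i}$, there exists $j\in[s]$ such that $c_{j,d}=-1$ for all $d\in\mathcal{D}$.
   Context: Sums are real sums. For positive integers $s,i$, $\lfloor s\rfloor_i$ denotes the largest integer $q$ such that $iq<s$ (e.g. $\lfloor 6\rfloor_2=2$); $\lfloor s/2\rfloor$ is the usual floor. *)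

From mathcomp Require Import all_boot all_order all_algebra.
Set Implicit Arguments. Unset Strict Implicit. Unset Printing Implicit Defensive.
Import Order.TTheory GRing.Theory Num.Theory.

(* floor_sub s i = largest integer q (q >= 0) with i * q < s.
   For i >= 1 every such q satisfies q < s, so the max over q <= s is exact. *)
Definition floor_sub (s i : nat) : nat := \max_(q < s.+1 | i * q < s) q.

Definition sigma (s n : nat) (c : 'I_s -> 'I_n -> int) (b : 'I_n) : int :=
  (\sum_(k < s) c k b)%R.

Definition Aset (s n : nat) (c : 'I_s -> 'I_n -> int) (i : nat) : {set 'I_n} :=
  [set b | sigma c b == (s%:Z - (2 * i)%:Z)%R].

(* For b in A_i the column c_{.,b} has exactly i entries -1 and s - i entries +1.
   A row j with c_{j,b} = 1 for all b in B exists as soon as the rows hit by a -1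
   somewhere in B do not exhaust all s rows; by the union bound there are at most
   i |B| of them, and i |B| < s is the defining property of floor_sub s i.
   The second claim is the same argument with the roles of +1 and -1 swapped. *)

From mathcomp Require Import all_boot all_order all_algebra.
From mathcomp Require Import zify.
Import Order.TTheory GRing.Theory Num.Theory.

Set Implicit Arguments.
Unset Strict Implicit.
Unset Printing Implicit Defensive.

Lemma card_bigcup_le (I T : finType) (P : pred I) (S : I -> {set T}) :
  #|\bigcup_(i | P i) S i| <= \sum_(i | P i) #|S i|.
Proof.
elim/big_rec2: _ => [|i m U _ hU]; first by rewrite cards0.
by rewrite (leq_trans (leq_card_setU _ _).1) ?leq_add2l.
Qed.

Lemma exists_avoiding_row (I J : finType) (P : J -> I -> bool) (B : {set I}) m :
    (forall b, b \in B -> #|[set k | P k b]| <= m) -> m * #|B| < #|J| ->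
  exists j, forall b, b \in B -> ~~ P j b.
Proof.
move=> hcol hB; set U := \bigcup_(b in B) [set k | P k b].
have ltU : #|U| < #|J|.
  apply: leq_ltn_trans (card_bigcup_le _ _) _.
  apply: leq_ltn_trans (_ : _ <= \sum_(b in B) m) _; first exact: leq_sum.
  by rewrite sum_nat_const mulnC.
have /set0Pn [j] : ~: U != set0 by rewrite -card_gt0 cardsCs setCK subn_gt0.
rewrite in_setC => jU; exists j => b bB.
by apply: contraNN jU => Pjb; apply/bigcupP; exists b; rewrite ?inE.
Qed.

Lemma mul_floor_sub_lt s i : 0 < s -> i * floor_sub s i < s.
Proof.
move=> s_gt0; apply: (big_ind (fun q => i * q < s)); rewrite ?muln0 //.
by move=> x y ? ?; rewrite /maxn; case: ifP.
Qed.

Section PlusMinusOneColumns.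

Variables (s n : nat) (c : 'I_s -> 'I_n -> int).
Hypothesis c_pm1 : forall k b, c k b = 1%R \/ c k b = (-1)%R.

Lemma card_col_eq1_neq1 b :
  #|[set k | c k b == 1%R]| + #|[set k | c k b != 1%R]| = s.
Proof.
rewrite -[RHS]card_ord -(cardsC [set k | c k b == 1%R]).
by congr (_ + _); apply: eq_card => k; rewrite !inE.
Qed.

Lemma col_neqN1_eq1 b : [set k | c k b != (-1)%R] = [set k | c k b == 1%R].
Proof. by apply/setP => k; rewrite !inE; case: (c_pm1 k b) => ->. Qed.

Lemma sigma_card_neq1 b :
  sigma c b = (s%:Z - (2 * #|[set k | c k b != 1%R]|)%:Z)%R.
Proof.
have card_split := card_col_eq1_neq1 b.
rewrite /sigma (bigID (fun k => c k b == 1%R)).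
rewrite (eq_bigr (fun _ => 1%R)); last by move=> k /eqP.
rewrite [X in (_ + X = _)%R](eq_bigr (fun _ => (-1)%R)); last first.
  by move=> k; case: (c_pm1 k b) => ->.
rewrite !sumr_const mulNrn (@eq_card _ _ [set k | c k b == 1%R]); last first.
  by move=> k; rewrite inE unfold_in.
rewrite (@eq_card _ (fun k => c k b != 1%R) [set k | c k b != 1%R]); last first.
  by move=> k; rewrite inE unfold_in.
by move: card_split; rewrite !natz; lia.
Qed.

Lemma card_col_neq1_Aset i b : b \in Aset c i -> #|[set k | c k b != 1%R]| = i.
Proof. by rewrite inE sigma_card_neq1 => /eqP; lia. Qed.

Lemma card_col_neqN1_Aset i b :
  b \in Aset c i -> #|[set k | c k b != (-1)%R]| = s - i.
Proof.
move=> /card_col_neq1_Aset <-; have := card_col_eq1_neq1 b.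
by rewrite col_neqN1_eq1; lia.
Qed.

End PlusMinusOneColumns.

Theorem lemma2 (s n : nat) (c : 'I_s -> 'I_n -> int)
  (hc : forall k b, c k b = 1%R \/ c k b = (-1)%R) :
  (forall i : nat, 1 <= i <= s./2 ->
     forall B : {set 'I_n}, B \subset Aset c i -> #|B| = floor_sub s i ->
       exists j : 'I_s, forall b, b \in B -> c j b = 1%R)
  /\
  (forall i : nat, s./2 + 1 <= i <= s - 1 ->
     forall D : {set 'I_n}, D \subset Aset c i -> #|D| = floor_sub s (s - i) ->
       exists j : 'I_s, forall d, d \in D -> c j d = (-1)%R).
Proof.
split=> [i /andP[i_gt0 i_le] B sBA cardB | i /andP[i_gt i_lt] D sDA cardD].
- have [j hj] : exists j, forall b, b \in B -> ~~ (c j b != 1%R).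
    apply: (exists_avoiding_row (m := i)).
      by move=> b /(subsetP sBA)/card_col_neq1_Aset ->.
    by rewrite card_ord cardB mul_floor_sub_lt //; lia.
  by exists j => b /hj; rewrite negbK => /eqP.
- have [j hj] : exists j, forall d, d \in D -> ~~ (c j d != (-1)%R).
    apply: (exists_avoiding_row (m := s - i)).
      by move=> d /(subsetP sDA)/card_col_neqN1_Aset ->.
    by rewrite card_ord cardD mul_floor_sub_lt //; lia.
  by exists j => d /hj; rewrite negbK => /eqP.
Qed.
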